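(* Let $(Y,\leq)$ be a partial order with $|Y|=\omega_1$. Then there is a cofinal subset $X\subseteq Y$ such that $(X,\leq)$ is well-founded and, for every $x\in X$, the set $(-\infty,x)_X=\{z\in X: z<x\}$ is countable.
   Context: A subset $X\subseteq Y$ is cofinal if for every $y\in Y$ there is $x\in X$ with $y\leq x$. *)

From HB Require Import structures.
From mathcomp Require Import all_boot all_order.
From mathcomp Require Import boolp classical_sets functions cardinality.
Set Implicit Arguments. Unset Strict Implicit. Unset Printing Implicit Defensive.
Import Order.TTheory.
Local Open Scope classical_set_scope.

(* A type Y has cardinality omega_1 iff it carries a well-order of order type
   omega_1: a strict total well-founded order all of whose proper initial
   segments are countable, while Y itself is uncountable. *)
Definition card_omega1 (Y : Type) : Prop :=
  exists lt : Y -> Y -> Prop,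
    (forall y, ~ lt y y) /\
    (forall x y z, lt x y -> lt y z -> lt x z) /\
    (forall x y, lt x y \/ x = y \/ lt y x) /\
    well_founded lt /\
    (forall y, countable [set z | lt z y]) /\
    ~ countable [set: Y].

Definition cofinal d (Y : porderType d) (X : set Y) : Prop :=
  forall y : Y, exists2 x, X x & (y <= x)%O.

Definition wf_on d (Y : porderType d) (X : set Y) : Prop :=
  forall A : set Y, A `<=` X -> A !=set0 ->
    exists2 m, A m & forall z, A z -> ~ (z < m)%O.

From HB Require Import structures.
From mathcomp Require Import all_boot all_order.
From mathcomp Require Import boolp classical_sets functions cardinality.
Set Implicit Arguments. Unset Strict Implicit. Unset Printing Implicit Defensive.
Import Order.POrderTheory.
Local Open Scope classical_set_scope.

(* Fix a well-order [lt] of type omega_1 on Y and keep those y that come first,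
   in [lt], among the elements of their own upper cone.  Every y lies below the
   [lt]-least element of its cone, so these points are cofinal; and between two
   kept points the partial order [<] is contained in [lt], so the kept points
   inherit well-foundedness from [lt] and have countable initial segments. *)

Lemma well_founded_min (T : Type) (R : T -> T -> Prop) (P : T -> Prop) (t : T) :
  well_founded R -> P t -> exists2 m, P m & forall z, R z m -> ~ P z.
Proof.
move=> wfR Pt; apply: contrapT => noMin.
suff never_P : forall x, ~ P x by exact: never_P Pt.
apply: (well_founded_ind wfR) => x IH Px.
by apply: noMin; exists x.
Qed.

Section ConeMinimal.
Variables (d : Order.disp_t) (Y : porderType d) (lt : Y -> Y -> Prop).

Definition cone_minimal : set Y := [set y | forall z, lt z y -> ~ (y <= z)%O].

Lemma cofinal_cone_minimal : well_founded lt -> cofinal cone_minimal.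
Proof.
move=> wf_lt y.
have [m ym m_min] := well_founded_min (P := fun x => (y <= x)%O) wf_lt (lexx y).
exists m => // z zm mz.
exact: m_min z zm (le_trans ym mz).
Qed.

Hypothesis lt_total : forall x y, lt x y \/ x = y \/ lt y x.

Lemma cone_minimal_lt x z : cone_minimal z -> (z < x)%O -> lt z x.
Proof.
move=> Xz zx; case: (lt_total z x) => [//|[ezx|xz]].
- by rewrite ezx ltxx in zx.
- by case: (Xz x xz); exact: ltW.
Qed.

Lemma wf_on_cone_minimal : well_founded lt -> wf_on cone_minimal.
Proof.
move=> wf_lt A AX [a Aa].
have [m Am m_min] := well_founded_min wf_lt Aa.
exists m => // z Az zm.
exact: m_min z (cone_minimal_lt (AX _ Az) zm) Az.
Qed.

Lemma countable_cone_minimal_lt x :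
  countable [set z | lt z x] ->
  countable [set z | cone_minimal z /\ (z < x)%O].
Proof.
move=> lt_x_countable; apply: sub_countable lt_x_countable.
by apply: subset_card_le => z [Xz zx]; exact: cone_minimal_lt Xz zx.
Qed.

End ConeMinimal.

Theorem mainTheorem1 (d : Order.disp_t) (Y : porderType d) (hY : card_omega1 Y) :
  exists X : set Y,
    cofinal X /\ wf_on X /\
    (forall x, X x -> countable [set z | X z /\ (z < x)%O]).
Proof.
case: hY => lt [_ [_ [lt_total [wf_lt [lt_countable _]]]]].
exists (cone_minimal lt); split; [|split].
- exact: cofinal_cone_minimal.
- exact: wf_on_cone_minimal.
- by move=> x _; apply: countable_cone_minimal_lt.
Qed.
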